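(* Let $G$ be an arbitrary graph and let the buyers' values be i.i.d. uniform on $[0,1]$. Then $$\inf_{\mathbf{T}\in\mathcal{N}_{(1/2)\cdot\mathbf{1}}}\mathcal{R}\big(\tfrac12\cdot\mathbf{1},\mathbf{T}\big)\ \ge\ \frac{e}{4}\cdot\sup_{p>0}\ \inf_{\mathbf{T}\in\mathcal{N}_{p\cdot\mathbf{1}}}\mathcal{R}(p\cdot\mathbf{1},\mathbf{T}).$$
   Context: Public-goods pricing game: $n$ buyers are the vertices of an undirected graph $G=([n],E)$; $N(i)=\{j:(i,j)\in E\}$ (so $i\notin N(i)$). Values i.i.d. uniform on $[0,1]$, $F(x)=\min\{1,x\}$ for $x\ge0$, $F(\infty)=1$. An equilibrium for price vector $\mathbf{p}$ is $\mathbf{T}\in[0,\infty]^n$ (buyer $i$ purchases iff $v_i\ge T_i$) with $T_i=p_i/\prod_{j\in N(i)}F(T_j)$ for all $i$ (convention $c/0=\infty$); $\mathcal{N}_{\mathbf{p}}$ is the set of equilibria; $\mathcal{R}(\mathbf{p},\mathbf{T})=\sum_ip_i(1-F(T_i))$; $p\cdot\mathbf{1}$ is the uniform price vector. *)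

From Stdlib Require Import Reals Lra.
Open Scope R_scope.

(* Extended nonnegative thresholds: [0, oo]. *)
Inductive ext : Type := Fin (x : R) | Infty.

(* CDF of Uniform[0,1]: F(x) = min{1,x} for x >= 0, F(oo) = 1. *)
Definition F (t : ext) : R :=
  match t with Fin x => Rmin 1 x | Infty => 1 end.

Definition ediv (c d : R) : ext :=
  if Req_EM_T d 0 then Infty else Fin (c / d).

(* A graph on vertex set {0,..,n-1}: adjacency relation adj (assumed symmetric
   and irreflexive in the theorem).  N(i) = { j < n | adj i j }. *)

Fixpoint nbr_prod (adj : nat -> nat -> bool) (T : nat -> ext) (i m : nat) : R :=
  match m with
  | O => 1
  | S m' => nbr_prod adj T i m' * (if adj i m' then F (T m') else 1)
  end.

Definition is_equilibrium (n : nat) (adj : nat -> nat -> bool)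
    (p : nat -> R) (T : nat -> ext) : Prop :=
  forall i, (i < n)%nat ->
    (forall x, T i = Fin x -> 0 <= x) /\
    T i = ediv (p i) (nbr_prod adj T i n).

Fixpoint revenue_aux (p : nat -> R) (T : nat -> ext) (m : nat) : R :=
  match m with
  | O => 0
  | S m' => revenue_aux p T m' + p m' * (1 - F (T m'))
  end.

Definition revenue (n : nat) (p : nat -> R) (T : nat -> ext) : R :=
  revenue_aux p T n.

Definition unif (q : R) : nat -> R := fun _ => q.

(* Let T' be any equilibrium for the uniform price 1/2 and write
   y_i = F(T'_i).  Every such y_i lies in [1/2, 1] (an equilibrium for
   price q has F(T_i) >= min(1, q), because neighbour products are <= 1).
   For a target price p >= 1 the constant profile T = p is an equilibrium
   selling to nobody, so the claim is trivial.  For p < 1 write p = (1/2)^k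
   with k = log_2 (1/p) >= 0.  The key structural fact is that raising an
   equilibrium to the power k gives an equilibrium: if T' solves the
   equilibrium equations for price q, then T_i = (q / D_i)^k, where D_i is
   the neighbour product of T', solves them for price q^k and satisfies
   F(T_i) = F(T'_i)^k (both x |-> x^k and products commute with min(1,.)).
   The revenue comparison is then buyer by buyer: for y in [1/2, 1] and
   k >= 0 we have (e/4) 2^(-k) (1 - y^k) <= (1 - y)/2, which follows from
   1 - y^k <= -k ln y, from t e^(-t) <= 1/e, and from the chord bound
   -ln y <= 2 ln 2 (1 - y) on [1/2, 1]. *)

From Stdlib Require Import Reals Lra Lia.
Open Scope R_scope.

Lemma Rpower_pos (x k : R) : 0 < Rpower x k.
Proof. apply exp_pos. Qed.

Lemma Rpower_1_l (k : R) : Rpower 1 k = 1.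
Proof. unfold Rpower. rewrite ln_1, Rmult_0_r. apply exp_0. Qed.

Lemma ln_le (x y : R) : 0 < x -> x <= y -> ln x <= ln y.
Proof.
  intros Hx [Hxy | <-]; [left; apply ln_increasing; assumption | apply Rle_refl].
Qed.

Lemma Rmin_1_Rpower (x k : R) : 0 < x -> 0 <= k ->
  Rmin 1 (Rpower x k) = Rpower (Rmin 1 x) k.
Proof.
  intros Hx Hk. destruct (Rle_lt_dec x 1) as [Hx1 | Hx1].
  - rewrite (Rmin_right 1 x) by exact Hx1. apply Rmin_right.
    rewrite <- (Rpower_1_l k). apply Rle_Rpower_l; lra.
  - rewrite (Rmin_left 1 x), Rpower_1_l by lra. apply Rmin_left.
    rewrite <- (Rpower_1_l k). apply Rle_Rpower_l; lra.
Qed.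

Lemma Rpower_div (x y k : R) : 0 < x -> 0 < y ->
  Rpower x k / Rpower y k = Rpower (x / y) k.
Proof.
  intros Hx Hy.
  assert (Hinv : Rpower (/ y) k = / Rpower y k).
  { unfold Rpower. rewrite ln_Rinv by exact Hy.
    rewrite <- exp_Ropp. f_equal. ring. }
  unfold Rdiv. rewrite <- Hinv.
  apply Rpower_mult_distr; [exact Hx | apply Rinv_0_lt_compat; exact Hy].
Qed.

Lemma Rpower_half_log2 (p : R) : 0 < p ->
  Rpower (1/2) (- ln p / ln 2) = p.
Proof.
  intros Hp. assert (Hl2 : 0 < ln 2) by (pose proof ln_lt_2; lra).
  unfold Rpower. replace (1/2) with (/ 2) by lra. rewrite ln_Rinv by lra.
  replace (- ln p / ln 2 * - ln 2) with (ln p) by (field; lra).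
  apply exp_ln; exact Hp.
Qed.

Lemma one_sub_Rpower_le (x k : R) : 1 - Rpower x k <= - (k * ln x).
Proof. unfold Rpower. pose proof (exp_ineq1_le (k * ln x)). lra. Qed.

Lemma mul_exp_neg_le (t : R) : t * exp (- t) <= exp (-1).
Proof.
  pose proof (exp_ineq1_le (t - 1)) as Hlin.
  assert (Hprod : exp (- t) * exp (t - 1) = exp (-1))
    by (rewrite <- exp_plus; f_equal; ring).
  pose proof (exp_pos (- t)). nra.
Qed.

(* On [1/2, 1] the convex function -ln lies below its chord. *)
Lemma neg_ln_le_chord (y : R) : 1/2 <= y <= 1 -> - ln y <= 2 * ln 2 * (1 - y).
Proof.
  intros Hy.
  assert (Hl2 : 0 < ln 2) by (pose proof ln_lt_2; lra).
  assert (HL0 : ln y <= 0) by (rewrite <- ln_1; apply ln_le; lra).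
  assert (HL1 : - ln 2 <= ln y) by (rewrite <- ln_Rinv by lra; apply ln_le; lra).
  (* Tangent-line bounds 1 + x <= e^x at x = -ln y and x = -ln (2y); a
     suitable combination of the two yields the chord inequality. *)
  assert (Htan1 : y * (1 - ln y) <= 1).
  { pose proof (exp_ineq1_le (- ln y)) as Hexp.
    rewrite exp_Ropp, exp_ln in Hexp by lra.
    assert (y * / y = 1) by (field; lra). nra. }
  assert (Htan2 : y * (1 - ln 2 - ln y) <= 1/2).
  { pose proof (exp_ineq1_le (- ln 2 - ln y)) as Hexp.
    replace (- ln 2 - ln y) with (- (ln 2 + ln y)) in Hexp by ring.
    rewrite exp_Ropp, exp_plus, !exp_ln in Hexp by lra.
    assert (y * / (2 * y) = 1/2) by (field; lra). nra. }
  assert (0 <= (ln 2 + ln y) * (1 - y * (1 - ln y))) by (apply Rmult_le_pos; lra).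
  assert (0 <= (- ln y) * (1/2 - y * (1 - ln 2 - ln y))) by (apply Rmult_le_pos; lra).
  nra.
Qed.

Lemma power_revenue_le (y k : R) : 1/2 <= y <= 1 -> 0 <= k ->
  exp 1 / 4 * (Rpower (1/2) k * (1 - Rpower y k)) <= 1/2 * (1 - y).
Proof.
  intros Hy Hk.
  assert (Hl2 : 0 < ln 2) by (pose proof ln_lt_2; lra).
  assert (Hhalf : Rpower (1/2) k = exp (- (k * ln 2))).
  { unfold Rpower. replace (1/2) with (/ 2) by lra.
    rewrite ln_Rinv by lra. f_equal; ring. }
  assert (Hy0 : 0 < y) by lra.
  pose proof (one_sub_Rpower_le y k) as Hloss.
  pose proof (mul_exp_neg_le (k * ln 2)) as Hmax.
  pose proof (neg_ln_le_chord y Hy) as Hchord.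
  assert (Hee : exp 1 * exp (-1) = 1)
    by (rewrite <- exp_plus; replace (1 + -1) with 0 by ring; apply exp_0).
  set (a := exp (- (k * ln 2))) in *.
  assert (Ha : 0 < a) by apply exp_pos.
  assert (He : 0 < exp 1) by apply exp_pos.
  assert (HL0 : ln y <= 0) by (rewrite <- ln_1; apply ln_le; lra).
  (* ln 2 * a (1 - y^k) <= (a k ln 2) (-ln y) <= e^(-1) 2 ln 2 (1 - y) *)
  assert (Hbound : ln 2 * (a * (1 - Rpower y k)) <= exp (-1) * (2 * ln 2 * (1 - y))).
  { apply Rle_trans with ((a * (k * ln 2)) * (- ln y)).
    - replace ((a * (k * ln 2)) * (- ln y)) with (ln 2 * (a * (- (k * ln y))))
        by ring.
      apply Rmult_le_compat_l; [lra |]. apply Rmult_le_compat_l; lra.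
    - apply Rmult_le_compat; [apply Rmult_le_pos; nra | lra | rewrite Rmult_comm; exact Hmax | exact Hchord]. }
  rewrite Hhalf. apply Rmult_le_reg_l with (ln 2); [exact Hl2 |].
  apply Rle_trans with (exp 1 / 4 * (exp (-1) * (2 * ln 2 * (1 - y)))).
  - replace (ln 2 * (exp 1 / 4 * (a * (1 - Rpower y k))))
      with (exp 1 / 4 * (ln 2 * (a * (1 - Rpower y k)))) by ring.
    apply Rmult_le_compat_l; lra.
  - replace (exp 1 / 4 * (exp (-1) * (2 * ln 2 * (1 - y))))
      with ((exp 1 * exp (-1)) * (ln 2 * (1 - y)) / 2) by field.
    rewrite Hee. lra.
Qed.

Lemma F_le_1 (t : ext) : F t <= 1.
Proof. destruct t; simpl; [apply Rmin_l | lra]. Qed.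

Lemma ediv_pos (c d : R) : 0 < d -> ediv c d = Fin (c / d).
Proof. intros Hd. unfold ediv. destruct (Req_EM_T d 0); [lra | reflexivity]. Qed.

Section NeighbourProducts.

Variables (adj : nat -> nat -> bool) (i : nat).

Lemma nbr_prod_bounds (T : nat -> ext) (m : nat) :
  (forall j, (j < m)%nat -> 0 <= F (T j)) -> 0 <= nbr_prod adj T i m <= 1.
Proof.
  induction m as [| m IH]; intros H; simpl; [lra |].
  specialize (IH (fun j Hj => H j ltac:(lia))).
  pose proof (H m ltac:(lia)). pose proof (F_le_1 (T m)).
  destruct (adj i m); nra.
Qed.

Lemma nbr_prod_pos (T : nat -> ext) (m : nat) :
  (forall j, (j < m)%nat -> 0 < F (T j)) -> 0 < nbr_prod adj T i m.
Proof.
  induction m as [| m IH]; intros H; simpl; [lra |].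
  specialize (IH (fun j Hj => H j ltac:(lia))).
  pose proof (H m ltac:(lia)).
  destruct (adj i m); nra.
Qed.

Lemma nbr_prod_one (T : nat -> ext) (m : nat) :
  (forall j, (j < m)%nat -> F (T j) = 1) -> nbr_prod adj T i m = 1.
Proof.
  induction m as [| m IH]; intros H; simpl; [reflexivity |].
  rewrite (IH (fun j Hj => H j ltac:(lia))), (H m ltac:(lia)).
  destruct (adj i m); ring.
Qed.

Lemma nbr_prod_Rpower (S T : nat -> ext) (k : R) (m : nat) :
  (forall j, (j < m)%nat -> 0 < F (T j) /\ F (S j) = Rpower (F (T j)) k) ->
  nbr_prod adj S i m = Rpower (nbr_prod adj T i m) k.
Proof.
  induction m as [| m IH]; intros H; simpl.
  - symmetry. apply Rpower_1_l.
  - rewrite (IH (fun j Hj => H j ltac:(lia))).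
    pose proof (nbr_prod_pos T m (fun j Hj => proj1 (H j ltac:(lia)))).
    destruct (H m ltac:(lia)) as [HT ->].
    destruct (adj i m).
    + apply Rpower_mult_distr; assumption.
    + rewrite !Rmult_1_r. reflexivity.
Qed.

End NeighbourProducts.

Lemma revenue_scaled_le (c : R) (p q : nat -> R) (T T' : nat -> ext) (m : nat) :
  (forall i, (i < m)%nat -> c * (p i * (1 - F (T i))) <= q i * (1 - F (T' i))) ->
  c * revenue_aux p T m <= revenue_aux q T' m.
Proof.
  induction m as [| m IH]; intros H; simpl; [lra |].
  specialize (IH (fun j Hj => H j ltac:(lia))).
  pose proof (H m ltac:(lia)). lra.
Qed.

Lemma equilibrium_F_nonneg (n : nat) (adj : nat -> nat -> bool) (p : nat -> R)
  (T : nat -> ext) : is_equilibrium n adj p T ->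
  forall j, (j < n)%nat -> 0 <= F (T j).
Proof.
  intros HT j Hj. destruct (T j) as [x |] eqn:E; simpl; [| lra].
  apply Rmin_glb; [lra |]. exact (proj1 (HT j Hj) x E).
Qed.

(* At a uniform price q every buyer declines with probability at least
   min(1, q), since neighbour products never exceed 1. *)
Lemma equilibrium_F_lower (n : nat) (adj : nat -> nat -> bool) (q : R)
  (T : nat -> ext) : 0 < q -> is_equilibrium n adj (unif q) T ->
  forall i, (i < n)%nat -> Rmin 1 q <= F (T i).
Proof.
  intros Hq HT i Hi.
  pose proof (nbr_prod_bounds adj i T n (equilibrium_F_nonneg n adj _ T HT)) as HD.
  rewrite (proj2 (HT i Hi)). unfold ediv, unif.
  destruct (Req_EM_T (nbr_prod adj T i n) 0); simpl; [apply Rmin_l |].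
  apply Rmin_glb; [apply Rmin_l |].
  apply Rle_trans with q; [apply Rmin_r |].
  apply Rmult_le_reg_r with (nbr_prod adj T i n); [lra |].
  field_simplify; nra.
Qed.

Lemma constant_equilibrium (n : nat) (adj : nat -> nat -> bool) (q : R) :
  1 <= q -> is_equilibrium n adj (unif q) (fun _ => Fin q).
Proof.
  intros Hq i Hi. split; [intros x Hx; injection Hx; lra |].
  rewrite nbr_prod_one by (intros j _; simpl; apply Rmin_left; lra).
  rewrite ediv_pos by lra. unfold unif. f_equal. field.
Qed.

Definition power_profile (n : nat) (adj : nat -> nat -> bool) (q k : R)
  (T : nat -> ext) : nat -> ext :=
  fun i => Fin (Rpower (q / nbr_prod adj T i n) k).

Section PowerEquilibrium.

Variables (n : nat) (adj : nat -> nat -> bool) (q k : R) (T : nat -> ext).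
Hypotheses (Hq : 0 < q) (Hk : 0 <= k) (HT : is_equilibrium n adj (unif q) T).

Lemma equilibrium_F_pos (j : nat) : (j < n)%nat -> 0 < F (T j).
Proof.
  intros Hj. apply Rlt_le_trans with (Rmin 1 q).
  - apply Rmin_glb_lt; lra.
  - exact (equilibrium_F_lower n adj q T Hq HT j Hj).
Qed.

Lemma equilibrium_nbr_prod_pos (i : nat) : 0 < nbr_prod adj T i n.
Proof. apply nbr_prod_pos. exact equilibrium_F_pos. Qed.

Lemma power_profile_F (i : nat) : (i < n)%nat ->
  F (power_profile n adj q k T i) = Rpower (F (T i)) k.
Proof.
  intros Hi. pose proof (equilibrium_nbr_prod_pos i) as HD.
  rewrite (proj2 (HT i Hi)), ediv_pos by exact HD.
  unfold power_profile, unif; simpl.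
  apply Rmin_1_Rpower; [apply Rdiv_lt_0_compat |]; assumption.
Qed.

Lemma power_profile_equilibrium :
  is_equilibrium n adj (unif (Rpower q k)) (power_profile n adj q k T).
Proof.
  intros i Hi. split.
  - intros x Hx. injection Hx as <-. left; apply Rpower_pos.
  - assert (Hprod : nbr_prod adj (power_profile n adj q k T) i n
                    = Rpower (nbr_prod adj T i n) k).
    { apply nbr_prod_Rpower. intros j Hj.
      split; [apply equilibrium_F_pos | apply power_profile_F]; exact Hj. }
    rewrite Hprod, ediv_pos by apply Rpower_pos.
    unfold power_profile, unif. f_equal.
    symmetry. apply Rpower_div; [exact Hq | apply equilibrium_nbr_prod_pos].
Qed.

End PowerEquilibrium.

Theorem theorem4p6 (n : nat) (adj : nat -> nat -> bool)
  (Hsym : forall i j, adj i j = adj j i)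
  (Hirr : forall i, adj i i = false) :
  forall T' : nat -> ext, is_equilibrium n adj (unif (1/2)) T' ->
  forall p : R, 0 < p ->
  forall eps : R, 0 < eps ->
  exists T : nat -> ext, is_equilibrium n adj (unif p) T /\
    exp 1 / 4 * revenue n (unif p) T <= revenue n (unif (1/2)) T' + eps.
Proof.
  intros T' HT' p Hp eps Heps.
  assert (Hy : forall i, (i < n)%nat -> 1/2 <= F (T' i) <= 1).
  { intros i Hi. split; [| apply F_le_1].
    rewrite <- (Rmin_right 1 (1/2)) by lra.
    apply (equilibrium_F_lower n adj); [lra | exact HT' | exact Hi]. }
  assert (He : 0 < exp 1) by apply exp_pos.
  enough (exists T, is_equilibrium n adj (unif p) T /\
            exp 1 / 4 * revenue n (unif p) T <= revenue n (unif (1/2)) T')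
    as (T & HT & Hrev) by (exists T; split; [exact HT | lra]).
  destruct (Rle_lt_dec 1 p) as [Hp1 | Hp1].
  -
    exists (fun _ => Fin p). split; [apply constant_equilibrium; exact Hp1 |].
    apply revenue_scaled_le. intros i Hi. specialize (Hy i Hi).
    unfold unif; simpl. rewrite Rmin_left by exact Hp1. nra.
  -
    set (k := - ln p / ln 2).
    assert (Hk : 0 <= k).
    { assert (ln p < 0) by (rewrite <- ln_1; apply ln_increasing; lra).
      pose proof ln_lt_2. unfold k, Rdiv.
      apply Rmult_le_pos; [lra | left; apply Rinv_0_lt_compat; lra]. }
    pose proof (Rpower_half_log2 p Hp) as Hpk. fold k in Hpk.
    exists (power_profile n adj (1/2) k T'). rewrite <- Hpk. split.
    + apply power_profile_equilibrium; [lra | exact Hk | exact HT'].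
    + apply revenue_scaled_le. intros i Hi. unfold unif.
      rewrite power_profile_F by (lra || assumption).
      apply power_revenue_le; [apply Hy; exact Hi | exact Hk].
Qed.
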